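(* Let $c>2$ be a constant. For all sufficiently large $n$ and all $p$ with $\frac{c\log n}{n}\le p\le 1$, we have $g_i\le t_1$ for all $2\le i\le\lfloor n/2\rfloor$, where $t_i=\binom{n-1}{i-1}(1-p)^{i(n-i)}$ and $g_i=t_i+t_{n-i}=\binom{n}{i}(1-p)^{i(n-i)}$.
   Context: $\log$ is the natural logarithm. *)

From Stdlib Require Import Reals.
Open Scope R_scope.

Definition t (n : nat) (p : R) (i : nat) : R :=
  C (n - 1) (i - 1) * (1 - p) ^ (i * (n - i)).

Definition g (n : nat) (p : R) (i : nat) : R := t n p i + t n p (n - i).

(* With q = 1 - p, Pascal's rule gives g_i = C(n,i) q^(i(n-i)) and t_1 = q^(n-1).
   Since i(n-i) = (n-1) + (i-1)(n-i-1), it suffices that C(n,i) q^((i-1)(n-i-1)) <= 1.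
   Bounding C(n,i) <= n^i = exp(i ln n) and q <= exp(-p), this follows from
   i ln n <= p (i-1)(n-i-1), which holds because p >= c ln n / n and
   i n <= c (i-1)(n-i-1) once n >= 4c/(c-2) and 2 <= i <= n/2. *)

From Stdlib Require Import Reals Lra Lia.
Open Scope R_scope.

Lemma C_n_0 (n : nat) : C n 0 = 1.
Proof. unfold C; rewrite Nat.sub_0_r; simpl; field; apply INR_fact_neq_0. Qed.

Lemma C_ge_0 (n k : nat) : 0 <= C n k.
Proof.
  unfold C; apply Rle_mult_inv_pos; [apply pos_INR|].
  apply Rmult_lt_0_compat; apply INR_fact_lt_0.
Qed.

Lemma C_le_pow (n k : nat) : (k <= n)%nat -> C n k <= INR n ^ k.
Proof.
  induction k as [|k IHk]; intros Hkn.
  - rewrite C_n_0; simpl; lra.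
  - rewrite pascal_step3 by lia; cbn [pow].
    assert (Hratio : INR (n - k) / INR (S k) <= INR n).
    { assert (HSk : 0 < INR (S k)) by (apply lt_0_INR; lia).
      apply Rmult_le_reg_r with (INR (S k)); [exact HSk|].
      unfold Rdiv; rewrite Rmult_assoc, Rinv_l, Rmult_1_r by lra.
      rewrite S_INR, minus_INR by lia.
      pose proof (pos_INR k); pose proof (pos_INR n); nra. }
    apply Rmult_le_compat; [| apply C_ge_0 | exact Hratio | apply IHk; lia].
    apply Rle_mult_inv_pos; [apply pos_INR | apply lt_0_INR; lia].
Qed.

Lemma exp_pow (x : R) (m : nat) : exp x ^ m = exp (INR m * x).
Proof.
  rewrite <- (exp_ln (exp x ^ m)) by (apply pow_lt, exp_pos).
  now rewrite ln_pow, ln_exp by apply exp_pos.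
Qed.

Lemma pow_one_sub_le_exp (p : R) (m : nat) :
  p <= 1 -> (1 - p) ^ m <= exp (- (p * INR m)).
Proof.
  intros Hp1.
  replace (- (p * INR m)) with (INR m * - p) by ring.
  rewrite <- exp_pow; apply pow_incr.
  pose proof (exp_ineq1_le (- p)); lra.
Qed.

Lemma C_mul_pow_le_1 (n k m : nat) (p : R) :
  (1 <= n)%nat -> (k <= n)%nat -> p <= 1 ->
  INR k * ln (INR n) <= p * INR m -> C n k * (1 - p) ^ m <= 1.
Proof.
  intros Hn Hkn Hp1 Hexponent.
  assert (HC : C n k <= exp (INR k * ln (INR n))).
  { rewrite <- exp_pow, exp_ln by (apply lt_0_INR; lia). now apply C_le_pow. }
  apply Rle_trans with (exp (INR k * ln (INR n)) * exp (- (p * INR m))).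
  - apply Rmult_le_compat; auto using C_ge_0, pow_one_sub_le_exp.
    apply pow_le; lra.
  - rewrite <- exp_plus, <- exp_0.
    assert (Hsum : INR k * ln (INR n) + - (p * INR m) <= 0) by lra.
    destruct Hsum as [Hlt | ->]; [left; now apply exp_increasing | lra].
Qed.

Lemma t_one (n : nat) (p : R) : t n p 1 = (1 - p) ^ (n - 1).
Proof. unfold t; rewrite Nat.sub_diag, C_n_0, Nat.mul_1_l; ring. Qed.

Lemma g_binomial (n : nat) (p : R) (i : nat) :
  (1 <= i)%nat -> (i < n)%nat -> g n p i = C n i * (1 - p) ^ (i * (n - i)).
Proof.
  intros Hi Hin; unfold g, t.
  replace (n - (n - i))%nat with i by lia.
  rewrite (Nat.mul_comm (n - i)), <- Rmult_plus_distr_r.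
  replace (n - i - 1)%nat with (n - 1 - i)%nat by lia.
  rewrite <- pascal_step1 by lia.
  destruct i as [|j]; [lia|]; destruct n as [|n']; [lia|].
  rewrite !Nat.sub_succ, !Nat.sub_0_r, pascal by lia; reflexivity.
Qed.

Lemma mul_sub_split (n i : nat) :
  (1 <= i)%nat -> (i < n)%nat ->
  (i * (n - i) = (n - 1) + (i - 1) * (n - i - 1))%nat.
Proof. intros; nia. Qed.

Lemma pairs_dominate (c : R) (n i : nat) :
  2 < c -> (2 <= i)%nat -> (2 * i <= n)%nat -> 4 * c <= (c - 2) * INR n ->
  INR i * INR n <= c * INR ((i - 1) * (n - i - 1)).
Proof.
  intros Hc Hi Hin Hn.
  rewrite mult_INR, !minus_INR by lia; simpl INR.
  apply le_INR in Hi, Hin; rewrite mult_INR in Hin; simpl INR in Hi, Hin.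
  assert (0 <= c * ((INR i - 2) * (INR n - 2 * INR i))) by (apply Rmult_le_pos; nra).
  assert (0 <= INR i * ((c - 2) * INR n - 4 * c)) by (apply Rmult_le_pos; lra).
  nra.
Qed.

Lemma ln_mul_le_of_threshold (c p : R) (n i m : nat) :
  (1 < n)%nat -> c * ln (INR n) / INR n <= p -> INR i * INR n <= c * INR m ->
  INR i * ln (INR n) <= p * INR m.
Proof.
  intros Hn Hp Hgap.
  assert (Hn1 : 1 < INR n) by (replace 1 with (INR 1) by reflexivity; now apply lt_INR).
  assert (Hln : 0 <= ln (INR n)) by (rewrite <- ln_1; left; apply ln_increasing; lra).
  apply Rle_trans with (c * ln (INR n) / INR n * INR m);
    [| apply Rmult_le_compat_r; [apply pos_INR | exact Hp]].
  apply Rmult_le_reg_r with (INR n); [lra|].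
  replace (c * ln (INR n) / INR n * INR m * INR n) with (c * INR m * ln (INR n)) by (field; lra).
  nra.
Qed.

Theorem lemma20 (c : R) (hc : 2 < c) :
  exists N : nat, forall n : nat, (N <= n)%nat ->
    forall p : R, c * ln (INR n) / INR n <= p -> p <= 1 ->
    forall i : nat, (2 <= i)%nat -> (i <= n / 2)%nat ->
      g n p i <= t n p 1.
Proof.
  destruct (INR_unbounded (4 * c / (c - 2))) as [N HN].
  exists N; intros n HNn p Hp Hp1 i Hi Hin.
  assert (H2i : (2 * i <= n)%nat) by (pose proof (Nat.Div0.mul_div_le n 2); lia).
  assert (Hlarge : 4 * c <= (c - 2) * INR n).
  { apply le_INR in HNn.
    replace (4 * c) with ((c - 2) * (4 * c / (c - 2))) by (field; lra).
    apply Rmult_le_compat_l; lra. }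
  rewrite g_binomial, t_one, mul_sub_split, pow_add by lia.
  rewrite <- Rmult_assoc, (Rmult_comm (C n i)), Rmult_assoc.
  rewrite <- (Rmult_1_r ((1 - p) ^ (n - 1))) at 2.
  apply Rmult_le_compat_l; [apply pow_le; lra|].
  apply C_mul_pow_le_1; [lia | lia | exact Hp1|].
  apply (ln_mul_le_of_threshold c); [lia | exact Hp|].
  now apply pairs_dominate.
Qed.
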